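(* Let $G$ be a graph and $\overline{G}$ its $K_{n,n}$-augmentation. Then $G$ is circulant if and only if $\overline{G}$ is circulant.
   Context: A graph on $n$ vertices is circulant if its vertices can be numbered $v_0,\dots,v_{n-1}$ so that, for all $x,z,d$, whenever $v_x$ and $v_{(x+d)\bmod n}$ are adjacent, $v_z$ and $v_{(z+d)\bmod n}$ are adjacent. For a graph $G=(V,E)$ with $n$ vertices, a clone of $G$ is a graph $G'=(V',E')$ isomorphic to $G$ with $V\cap V'=\emptyset$; the $K_{n,n}$-augmentation of $G$ is the graph $\overline{G}$ with vertex set $V\cup V'$ and edge set $E\cup E'\cup\{\{v,w\}: v\in V, w\in V'\}$ (the join of $G$ with a clone). *)

From mathcomp Require Import all_boot.
Set Implicit Arguments. Unset Strict Implicit. Unset Printing Implicit Defensive.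

Definition ord_addmod (n : nat) (x d : 'I_n) : 'I_n :=
  Ordinal (ltn_pmod (x + d) (leq_ltn_trans (leq0n x) (ltn_ord x))).

Definition circulant (T : finType) (e : rel T) : Prop :=
  exists v : 'I_#|T| -> T, bijective v /\
    forall x z d : 'I_#|T|,
      e (v x) (v (ord_addmod x d)) -> e (v z) (v (ord_addmod z d)).

(* K_{n,n}-augmentation: vertex set V ⊔ V' (V' a disjoint clone of V, here
   the right summand), edges E ∪ E' ∪ {all pairs between V and V'}. *)
Definition knn_aug (T : finType) (e : rel T) : rel (T + T)%type :=
  fun u w => match u, w with
             | inl a, inl b => e a b
             | inr a, inr b => e a b
             | _, _ => true
             end.

From mathcomp Require Import all_boot zify.
Set Implicit Arguments. Unset Strict Implicit. Unset Printing Implicit Defensive.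

(* A circulant numbering is a labelling of the vertices by Z/n in which the
   adjacency of x and y depends only on y - x.  Interleaving such labellings of
   G and of its clone (even and odd residues mod 2n) labels the augmentation,
   because vertices at odd distance lie in different copies and are adjacent.
   Conversely, label the augmentation by Z/2n and let g be the least period of
   the pattern of copies.  Non-adjacent vertices lie in the same copy, so by
   translation invariance their difference is a period of that pattern, hence
   a multiple of g.  The positions of G thus form k residue classes mod g;
   listing them class by class in each block of length g numbers G cyclically:
   a shift by a multiple of k is a translation by a multiple of g, and any
   other shift changes the residue mod g, hence joins adjacent vertices. *)

Definition periodic (A : Type) (s : nat -> A) (p : nat) : Prop :=
  forall x, s (x + p) = s x.

Section Periods.

Variables (A : Type) (s : nat -> A).

Lemma periodicD p q : periodic s p -> periodic s q -> periodic s (p + q).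
Proof. by move=> sp sq x; rewrite addnA sq sp. Qed.

Lemma periodicDr p q : periodic s (p + q) -> periodic s q -> periodic s p.
Proof. by move=> spq sq x; rewrite -sq -addnA spq. Qed.

Lemma periodicM p q : periodic s p -> periodic s (q * p).
Proof.
move=> sp; elim: q => [|q IHq] x; first by rewrite mul0n addn0.
by rewrite mulSn periodicD.
Qed.

Lemma periodic_modn p : periodic s p -> forall x, s (x %% p) = s x.
Proof. by move=> sp x; rewrite {2}(divn_eq x p) addnC periodicM. Qed.

End Periods.

Lemma fundamental_period (A : eqType) (s : nat -> A) n :
  0 < n -> periodic s n -> exists2 g, 0 < g & forall p, periodic s p <-> g %| p.
Proof.
move=> n_gt0 sn.
have periodicP p : reflect (periodic s p) (all (fun x => s (x + p) == s x) (iota 0 n)).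
  apply: (iffP allP) => [sp x | sp x _]; last exact/eqP/sp.
  rewrite -(periodic_modn sn) -modnDml (periodic_modn sn) -[RHS](periodic_modn sn).
  by apply/eqP/sp; rewrite mem_iota ltn_pmod.
have ex_period : exists p, (0 < p) && all (fun x => s (x + p) == s x) (iota 0 n).
  by exists n; rewrite n_gt0; apply/periodicP.
case: (ex_minnP ex_period) => g /andP[g_gt0 /periodicP sg] g_min.
exists g => // p; split=> [sp | /dvdnP[q ->]]; last exact: periodicM.
have sr : periodic s (p %% g).
  by apply: (periodicDr (q := p %/ g * g)); [rewrite addnC -divn_eq | exact: periodicM].
rewrite /dvdn; apply: contraLR (ltn_pmod p g_gt0); rewrite -lt0n -leqNgt => r_gt0.
by apply: g_min; rewrite r_gt0; apply/periodicP.
Qed.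

(* Indexed by nat and extended periodically, to avoid arithmetic in 'I_n. *)
Definition cyclic_numbering (T : finType) (e : rel T) (n : nat) (f : nat -> T) :=
  [/\ periodic f n,
      forall t, exists2 x, x < n & f x = t,
      {in [pred x | x < n] &, injective f}
    & forall x d, e (f x) (f (x + d)) = e (f 0) (f d)].

Section CyclicNumbering.

Variables (T : finType) (e : rel T) (n : nat) (f : nat -> T).
Hypothesis f_num : cyclic_numbering e n f.

Lemma cyclic_numbering_card : n = #|T|.
Proof.
case: f_num => _ f_surj f_inj _.
pose v (i : 'I_n) := f i.
have v_inj : injective v by move=> i j /(f_inj _ _ (ltn_ord i) (ltn_ord j)) /val_inj.
have v_surj : codom v =i T.
  by move=> t; have [x x_lt <-] := f_surj t; apply/codomP; exists (Ordinal x_lt).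
by rewrite -(card_ord n) -(card_codom v_inj); apply: eq_card.
Qed.

Lemma cyclic_numbering_circulant : circulant e.
Proof.
have n_card := cyclic_numbering_card; case: f_num => f_per _ f_inj f_shift.
rewrite n_card in f_per f_inj.
have v_inj : injective (fun i : 'I_#|T| => f i).
  by move=> i j /(f_inj _ _ (ltn_ord i) (ltn_ord j)) /val_inj.
exists (fun i : 'I_#|T| => f i); split; first by apply: inj_card_bij v_inj _; rewrite card_ord.
by move=> x z d /=; rewrite !(periodic_modn f_per) f_shift -(f_shift z).
Qed.

Lemma cyclic_numbering_diff : 0 < n ->
  forall x y, exists2 d, x + d = y %[mod n] & e (f x) (f y) = e (f 0) (f d).
Proof.
case: f_num => f_per _ _ f_shift n_gt0 x y.
have x_mod_lt := ltn_pmod x n_gt0.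
have x_eq := divn_eq x n.
have diff_mod : x + (y + (n - x %% n)) = y %[mod n].
  have -> : x + (y + (n - x %% n)) = (x %/ n).+1 * n + y by lia.
  exact: modnMDl.
exists (y + (n - x %% n)) => //.
by rewrite -(f_shift x) -(periodic_modn f_per (x + _)) diff_mod periodic_modn.
Qed.

End CyclicNumbering.

Lemma circulant_cyclic_numbering (T : finType) (e : rel T) :
  0 < #|T| -> circulant e -> exists f, cyclic_numbering e #|T| f.
Proof.
move=> T_gt0 [v [[w vK wK] v_shift]].
pose mod_ord x := Ordinal (ltn_pmod x T_gt0).
have mod_ordD x d : mod_ord (x + d) = ord_addmod (mod_ord x) (mod_ord d).
  by apply: val_inj; rewrite /= modnDm.
exists (v \o mod_ord); split=> /=.
- by move=> x; congr v; apply: val_inj; rewrite /= modnDr.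
- move=> t; exists (w t) => //; rewrite -[RHS]wK; congr v.
  by apply: val_inj; rewrite /= modn_small.
- move=> x y x_lt y_lt /(bij_inj (Bijective vK wK)) /(congr1 val) /=.
  by rewrite !modn_small.
- move=> x d; have := mod_ordD 0 d; rewrite add0n => ->.
  by rewrite mod_ordD; apply/idP/idP; apply: v_shift.
Qed.

Lemma circulant_card0 (T : finType) (e : rel T) : #|T| = 0 -> circulant e.
Proof.
move=> T0.
have no_ord : 'I_#|T| -> False by case=> i; rewrite T0.
have no_vertex (t : T) : False by move: (max_card (pred1 t)); rewrite T0 card1.
exists (fun i => match no_ord i with end); split=> [|x]; last by case: (no_ord x).
by exists (fun t => match no_vertex t with end) => [i|t]; [case: (no_ord i)|case: (no_vertex t)].
Qed.

Lemma circulantP (T : finType) (e : rel T) :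
  0 < #|T| -> circulant e <-> exists n f, cyclic_numbering e n f.
Proof.
move=> T_gt0; split=> [/(circulant_cyclic_numbering T_gt0) [f f_num] | [n [f]]].
  by exists #|T|, f.
exact: cyclic_numbering_circulant.
Qed.

Definition interleave (T : Type) (f : nat -> T) (y : nat) : T + T :=
  if odd y then inr (f y./2) else inl (f y./2).

Lemma interleave_cyclic_numbering (T : finType) (e : rel T) n f :
  cyclic_numbering e n f -> cyclic_numbering (knn_aug e) (n + n) (interleave f).
Proof.
case=> f_per f_surj f_inj f_shift.
have halfDdouble y z : (y + z.*2)./2 = y./2 + z.
  by rewrite halfD odd_double andbF add0n doubleK.
split.
- by move=> x; rewrite /interleave addnn oddD odd_double addbF halfDdouble f_per.
- case=> t; have [x x_lt <-] := f_surj t.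
  + by exists x.*2; rewrite ?addnn ?ltn_double // /interleave odd_double doubleK.
  + exists x.*2.+1; first by rewrite addnn ltn_Sdouble.
    by rewrite /interleave /= odd_double uphalf_double.
- move=> x y; rewrite !inE addnn -!ltn_half_double => x_lt y_lt.
  rewrite /interleave => same; rewrite -(odd_double_half x) -(odd_double_half y).
  by move: same; case: (odd x); case: (odd y) => // -[/(f_inj _ _ x_lt y_lt) ->].
- move=> x d; rewrite /interleave /= oddD.
  case: (boolP (odd d)) => [|d_even]; first by case: (odd x).
  by rewrite halfD (negPf d_even) andbF add0n; case: (odd x); rewrite /= f_shift.
Qed.

Lemma knn_aug_nonadjacent_same_side (T : finType) (e : rel T) u w :
  knn_aug e u w = false -> is_inl u = is_inl w.
Proof. by case: u; case: w. Qed.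

Section LeftRestriction.

Variables (T : finType) (e : rel T) (M : nat) (F : nat -> T + T) (t0 : T).
Hypotheses (M_gt0 : 0 < M) (F_num : cyclic_numbering (knn_aug e) M F).
Variable g : nat.
Hypotheses (g_gt0 : 0 < g) (g_period : forall p, periodic (is_inl \o F) p <-> g %| p).

Let F_per : periodic F M. Proof. by case: F_num. Qed.

Let F_shift x d : knn_aug e (F x) (F (x + d)) = knn_aug e (F 0) (F d).
Proof. by case: F_num. Qed.

Lemma period_dvdn_M : g %| M.
Proof. by apply/g_period => x /=; rewrite F_per. Qed.

Lemma is_inl_F_modg x : is_inl (F (x %% g)) = is_inl (F x).
Proof.
by apply: (periodic_modn (s := is_inl \o F)); apply/g_period.
Qed.

Lemma nonadjacent_eq_modg x y : knn_aug e (F x) (F y) = false -> x = y %[mod g].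
Proof.
have [d xd_y ->] := cyclic_numbering_diff F_num M_gt0 x y => nonadj.
have /g_period/dvdnP[q d_eq] : periodic (is_inl \o F) d.
  by move=> z /=; apply/esym/(knn_aug_nonadjacent_same_side (e := e)); rewrite F_shift.
by rewrite -(modn_dvdm y period_dvdn_M) -xd_y modn_dvdm ?period_dvdn_M // d_eq addnC modnMDl.
Qed.

Let c := [seq r <- iota 0 g | is_inl (F r)].
Let k := size c.
Let h := M %/ g.

Definition left_index (i : nat) : nat := nth 0 c (i %% k) + i %/ k * g.

Definition left_numbering (i : nat) : T :=
  if F (left_index i) is inl t then t else t0.

Lemma mem_left_residues r : (r \in c) = (r < g) && is_inl (F r).
Proof. by rewrite mem_filter mem_iota add0n andbC. Qed.

Lemma left_residues_gt0 : 0 < k.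
Proof.
case: F_num => _ F_surj _ _; have [x _ Fx] := F_surj (inl t0).
rewrite /k -has_predT; apply/hasP; exists (x %% g) => //.
by rewrite mem_left_residues ltn_pmod // is_inl_F_modg Fx.
Qed.

Lemma left_residue i : nth 0 c (i %% k) < g /\ is_inl (F (nth 0 c (i %% k))).
Proof. by apply/andP; rewrite -mem_left_residues mem_nth // ltn_pmod ?left_residues_gt0. Qed.

Lemma left_index_modg i : left_index i %% g = nth 0 c (i %% k).
Proof. by have [r_lt _] := left_residue i; rewrite /left_index addnC modnMDl modn_small. Qed.

Lemma left_index_divg i : left_index i %/ g = i %/ k.
Proof.
have [r_lt _] := left_residue i.
by rewrite /left_index addnC divnMDl // (divn_small r_lt) addn0.
Qed.

Lemma F_left_index i : F (left_index i) = inl (left_numbering i).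
Proof.
have := is_inl_F_modg (left_index i); rewrite left_index_modg.
by case: (left_residue i) => _ ->; rewrite /left_numbering; case: (F _).
Qed.

Lemma left_index_inj : injective left_index.
Proof.
move=> i j same.
have /eqP : nth 0 c (i %% k) = nth 0 c (j %% k) by rewrite -!left_index_modg same.
rewrite nth_uniq ?ltn_pmod ?left_residues_gt0 ?filter_uniq ?iota_uniq // => /eqP ij_mod.
by rewrite (divn_eq i k) (divn_eq j k) -!left_index_divg same ij_mod.
Qed.

Lemma left_indexDM i q : left_index (i + q * k) = left_index i + q * g.
Proof.
rewrite /left_index (addnC i) modnMDl divnMDl ?left_residues_gt0 // mulnDl; lia.
Qed.

Lemma left_index_lt i : i < k * h -> left_index i < M.
Proof.
move=> i_lt; have [r_lt _] := left_residue i.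
have q_lt : i %/ k < h by rewrite ltn_divLR ?left_residues_gt0 // mulnC.
rewrite -(divnK period_dvdn_M) -/h; apply: leq_trans (leq_mul q_lt (leqnn g)).
by rewrite /left_index mulSn ltn_add2r.
Qed.

Lemma left_index_surj x : x < M -> is_inl (F x) -> exists2 i, i < k * h & left_index i = x.
Proof.
move=> x_lt x_left.
have x_res : x %% g \in c by rewrite mem_left_residues ltn_pmod // is_inl_F_modg.
have j_lt : index (x %% g) c < k by rewrite index_mem.
have q_lt : x %/ g < h by rewrite ltn_divLR // divnK // period_dvdn_M.
exists (index (x %% g) c + x %/ g * k).
  apply: leq_trans (leq_mul (leqnn k) q_lt).
  by rewrite mulnS (mulnC k) ltn_add2r.
rewrite left_indexDM /left_index (modn_small j_lt) (divn_small j_lt) mul0n addn0.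
by rewrite nth_index // addnC -divn_eq.
Qed.

Lemma left_index_adjacent i d :
  ~~ (k %| d) -> knn_aug e (F (left_index i)) (F (left_index (i + d))).
Proof.
apply: contraNT => /negbTE /nonadjacent_eq_modg /eqP.
rewrite !left_index_modg nth_uniq ?ltn_pmod ?left_residues_gt0 ?filter_uniq ?iota_uniq //.
by rewrite -{1}[i]addn0 eqn_modDl mod0n eq_sym.
Qed.

Lemma left_numbering_cyclic : cyclic_numbering e (k * h) left_numbering.
Proof.
have e_left a b : e (left_numbering a) (left_numbering b) =
    knn_aug e (F (left_index a)) (F (left_index b)) by rewrite !F_left_index.
case: F_num => _ F_surj F_inj _; split.
- by move=> i; rewrite /left_numbering mulnC left_indexDM divnK ?period_dvdn_M // F_per.
- move=> t; have [x x_lt Fx] := F_surj (inl t).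
  have [|i i_lt ix] := left_index_surj x_lt; first by rewrite Fx.
  by exists i => //; move: (F_left_index i); rewrite ix Fx => -[].
- move=> i j i_lt j_lt same; apply/left_index_inj/F_inj; rewrite ?inE ?left_index_lt //.
  by rewrite !F_left_index same.
- move=> x d; rewrite !e_left; have [/dvdnP[q ->] | not_dvd] := boolP (k %| d).
    by have := left_indexDM 0 q; rewrite add0n => ->; rewrite left_indexDM !F_shift.
  by have := left_index_adjacent 0 not_dvd; rewrite add0n => ->; rewrite left_index_adjacent.
Qed.

End LeftRestriction.

Lemma knn_aug_cyclic_numbering (T : finType) (e : rel T) M F :
  0 < M -> cyclic_numbering (knn_aug e) M F -> exists n f, cyclic_numbering e n f.
Proof.
move=> M_gt0 F_num; have t0 : T by case: (F 0).
have [|g g_gt0 g_period] := @fundamental_period _ (is_inl \o F) M M_gt0.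
  by case: F_num => F_per _ _ _ x /=; rewrite F_per.
by do 2!eexists; exact: (left_numbering_cyclic t0 M_gt0 F_num g_gt0 g_period).
Qed.

Theorem lemma10 (T : finType) (e : rel T) :
  symmetric e -> irreflexive e ->
  (circulant e <-> circulant (knn_aug e)).
Proof.
move=> _ _.
have [T0|T_gt0] := posnP #|T|.
  by split=> _; apply: circulant_card0; rewrite ?card_sum T0.
have TT_gt0 : 0 < #|{: T + T}| by rewrite card_sum addn_gt0 T_gt0.
split=> [/(circulantP _ T_gt0) [n [f f_num]] | /(circulantP _ TT_gt0) [M [F F_num]]].
  by apply/circulantP => //; exists (n + n), (interleave f); apply: interleave_cyclic_numbering.
have M_gt0 : 0 < M by rewrite (cyclic_numbering_card F_num).
by apply/(circulantP _ T_gt0); apply: knn_aug_cyclic_numbering F_num.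
Qed.
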